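(* Let $H$ be a simple $3$-connected graph and $\mathcal{F}$ an arbitrary family of injective maps from $X=\{a,b,c,d\}$ to $V(H)$. Let $G$ be a $2$-connected graph with $X\subseteq V(G)$ and a $2$-separation $(A,B)$ with $A\cap B=\{u,v\}$, and let $G_A=G[A]\cup\{uv\}$ (with any resulting parallel edge removed). If $X\subseteq A$, then $G$ has an $H(X)$-minor if and only if $G_A$ has an $H(X)$-minor.
   Context: A $2$-separation is a pair $(A,B)$ with $A\cup B=V(G)$, $|A\cap B|\le2$ and no edge between $A\setminus B$ and $B\setminus A$. An $H$-model in $G$ is a family $\{G_x:x\in V(H)\}$ of pairwise vertex-disjoint connected subgraphs of $G$ such that for every edge $xy\in E(H)$ some vertex of $G_x$ is adjacent in $G$ to some vertex of $G_y$. For injective $\pi:X\to V(H)$, $G$ has an $H(X)$-minor with respect to $\pi$ if there is an $H$-model with $w\in V(G_{\pi(w)})$ for all $w\in X$; $G$ has an $H(X)$-minor (with respect to $\mathcal{F}$) if this holds for some $\pi\in\mathcal{F}$. *)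

From mathcomp Require Import all_boot.
Set Implicit Arguments. Unset Strict Implicit. Unset Printing Implicit Defensive.

Definition simple_graph (V : finType) (e : rel V) : Prop :=
  symmetric e /\ irreflexive e.

Definition restr (V : finType) (e : rel V) (S : {set V}) : rel V :=
  [rel x y | [&& e x y, x \in S & y \in S]].

Definition connected_on (V : finType) (e : rel V) (S : {set V}) : Prop :=
  S != set0 /\ forall x y, x \in S -> y \in S -> connect (restr e S) x y.

Definition k_connected (V : finType) (e : rel V) (k : nat) : Prop :=
  k < #|V| /\ forall S : {set V}, #|S| < k -> connected_on e (~: S).

Definition two_separation (V : finType) (e : rel V) (A B : {set V}) : Prop :=
  A :|: B = setT /\ #|A :&: B| <= 2 /\
  forall x y, x \in A :\: B -> y \in B :\: A -> ~~ e x y.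

(* G_A = G[A] + uv (as a simple relation, no parallel edges), a graph on
   the vertex set A. *)
Definition GA_rel (V : finType) (e : rel V) (A : {set V}) (u v : V) : rel V :=
  [rel x y | [&& x \in A, y \in A &
     [|| e x y, (x == u) && (y == v) | (x == v) && (y == u)]]].

Definition model (VH : finType) (eH : rel VH) (V : finType) (e : rel V)
  (S : {set V}) (M : VH -> {set V}) : Prop :=
  (forall x, M x \subset S) /\
  (forall x, connected_on e (M x)) /\
  (forall x y, x != y -> [disjoint M x & M y]) /\
  (forall x y, eH x y -> exists a b, [/\ a \in M x, b \in M y & e a b]).

Definition has_HX_minor_wrt (VH : finType) (eH : rel VH) (V : finType)
  (e : rel V) (S : {set V}) (X : {set V}) (pi : V -> VH) : Prop :=
  exists M, model eH e S M /\ forall w, w \in X -> w \in M (pi w).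

Definition has_HX_minor (VH : finType) (eH : rel VH) (V : finType)
  (e : rel V) (S : {set V}) (X : {set V}) (F : (V -> VH) -> Prop) : Prop :=
  exists pi, F pi /\ has_HX_minor_wrt eH e S X pi.

From mathcomp Require Import all_boot.
Set Implicit Arguments. Unset Strict Implicit. Unset Printing Implicit Defensive.

(* A connected set of vertices of G that meets both A and B \ A contains u or
   v, and a walk inside it projects onto A by replacing each excursion into
   B \ A, which leaves and re-enters A through {u, v}, with the edge uv.  So
   intersecting the branch sets of an H(X)-model of G with A gives a model of
   G_A, an edge of the model leaving A being traded for uv between the branch
   sets containing u and v.  This needs every branch set to meet A: the branch
   sets inside B \ A only have H-neighbours among the at most two branch sets
   containing u or v, so by 3-connectivity of H they would absorb every other
   vertex of H, including one of the four vertices pi(X), whose branch sets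
   contain the vertices of X inside A.
   Conversely, since G is 2-connected and A \ B is nonempty (|X| = 4 > 2),
   some component C of G[B \ A] is adjacent to both u and v; adding C to the
   branch set containing u realises the edge uv of G_A by a path through C. *)

Section Connect.
Variables (T : finType) (r : rel T).

Lemma connect_closed (P : {set T}) x y :
  (forall p q, p \in P -> r p q -> q \in P) ->
  x \in P -> connect r x y -> y \in P.
Proof.
move=> clP + /connectP[p pth ->].
elim: p x pth => //= z p IH x /andP[rxz pth] xP.
exact: IH pth (clP _ _ xP rxz).
Qed.

Lemma connect_exit (P : {set T}) x y :
  x \in P -> y \notin P -> connect r x y ->
  exists p q, [/\ p \in P, q \notin P & r p q].
Proof.
move=> xP yP xy.
have [/existsP[p /existsP[q /and3P[pP qP rpq]]]|noexit] :=
  boolP [exists p, exists q, [&& p \in P, q \notin P & r p q]].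
  by exists p, q.
case/negP: yP; apply: connect_closed xP xy => p q pP rpq.
apply: contraNT noexit => qP; apply/existsP; exists p; apply/existsP; exists q.
by rewrite pP qP rpq.
Qed.

End Connect.

Section Restr.
Variables (V : finType) (e : rel V).

Lemma connect_restr_mem (S : {set V}) x y :
  x \in S -> connect (restr e S) x y -> y \in S.
Proof. by move=> xS; apply: connect_closed xS => p q _ /and3P[]. Qed.

Lemma connect_restrS (S S' : {set V}) x y :
  S \subset S' -> connect (restr e S) x y -> connect (restr e S') x y.
Proof.
move=> sSS'; apply: connect_sub => a b /and3P[eab aS bS].
by apply: connect1; apply/and3P; split; rewrite // (subsetP sSS').
Qed.

Lemma GA_relP A u v a b : GA_rel e A u v a b ->
  [\/ e a b, a = u /\ b = v | a = v /\ b = u].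
Proof.
by case/and3P=> _ _ /or3P[|/andP[/eqP-> /eqP->]|/andP[/eqP-> /eqP->]];
  [constructor 1 | constructor 2 | constructor 3].
Qed.

Definition component (S : {set V}) x := [set y | connect (restr e S) x y].

Hypothesis e_sym : symmetric e.

Lemma connect_restrC (S : {set V}) : connect_sym (restr e S).
Proof.
by apply: sym_connect_sym => x y; rewrite /restr /= e_sym (andbC (x \in S)).
Qed.

Lemma connected_onP (S : {set V}) x :
  x \in S -> (forall y, y \in S -> connect (restr e S) x y) -> connected_on e S.
Proof.
move=> xS xS_conn; split; first by apply/set0Pn; exists x.
move=> y z /xS_conn xy /xS_conn xz.
by apply: connect_trans xz; rewrite connect_restrC.
Qed.

Lemma connected_component (S : {set V}) x : connected_on e (component S x).
Proof.
set C := component S x; have xC : x \in C by rewrite inE connect0.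
apply: (connected_onP xC) => y; rewrite inE => xy.
suff: y \in [set z | connect (restr e C) x z] by rewrite inE.
apply: connect_closed xy; last by rewrite inE connect0.
move=> z z'; rewrite !inE => xz /and3P[ezz' zS z'S].
have zC := connect_restr_mem xC xz.
have z'C : z' \in C.
  move: zC; rewrite !inE => /connect_trans; apply.
  by apply: connect1; apply/and3P.
by apply: connect_trans xz (connect1 _); apply/and3P.
Qed.

End Restr.

Lemma k_connected_closed (T : finType) (r : rel T) k (S J : {set T}) x :
  k_connected r k -> #|S| < k -> x \in J -> x \notin S ->
  (forall y z, y \in J -> r y z -> z \notin S -> z \in J) ->
  forall z, z \notin S -> z \in J.
Proof.
move=> [_ conn] ltSk xJ xS clJ z zS.
have xz : connect (restr r (~: S)) x z by apply: (conn S ltSk).2; rewrite inE.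
apply: connect_closed xz => // y y' yJ /and3P[ryy' _].
by rewrite inE; apply: clJ yJ ryy'.
Qed.

Lemma card_branches_le1 (I T : finType) (M : I -> {set T}) w :
  (forall x y, x != y -> [disjoint M x & M y]) -> #|[set x | w \in M x]| <= 1.
Proof.
move=> Mdisj; apply/card_le1_eqP => x y; rewrite !inE => wx wy.
by apply/eqP; apply: contraTT wy => /Mdisj/disjointFl/(_ wx)->.
Qed.

Section Separation.
Variables (V : finType) (e : rel V) (A B : {set V}) (u v : V).
Hypotheses (e_sym : symmetric e) (sepAB : two_separation e A B)
  (capAB : A :&: B = [set u; v]).

Local Notation GA := (GA_rel e A u v).

Lemma sep_uv : [/\ u \in A, v \in A, u \in B & v \in B].
Proof.
have: u \in A :&: B /\ v \in A :&: B by rewrite capAB !inE !eqxx orbT.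
by rewrite !inE => -[/andP[-> ->] /andP[-> ->]].
Qed.

Lemma sep_cap z : z \in A -> z \in B -> (z == u) || (z == v).
Proof. by move=> zA zB; rewrite -in_set2 -capAB inE zA zB. Qed.

Lemma sep_notin_A z : z \notin A -> z \in B.
Proof.
case: sepAB => AUB _ zA; have: z \in A :|: B by rewrite AUB inE.
by rewrite inE (negbTE zA).
Qed.

Lemma sep_edge z y : z \notin A -> e z y -> y \in B.
Proof.
move=> zA ezy; apply: contraT => yB.
have yA : y \in A := contraNT (@sep_notin_A y) yB.
case: sepAB => _ [_ /(_ y z)].
by rewrite !inE yA yB zA sep_notin_A // e_sym ezy => /(_ isT isT).
Qed.

Lemma sep_edge_cases a b :
  e a b -> (a \in A) && (b \in A) \/ (a \in B) && (b \in B).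
Proof.
move=> eab; case aA: (a \in A); case bA: (b \in A); [by left | right..].
- by rewrite (sep_notin_A (negbT bA)) (sep_edge (negbT bA)) // e_sym.
- by rewrite (sep_notin_A (negbT aA)) (sep_edge (negbT aA)).
- by rewrite !sep_notin_A ?aA ?bA.
Qed.

Lemma GA_uv : GA u v /\ GA v u.
Proof. by have [uA vA _ _] := sep_uv; rewrite /GA_rel /= uA vA !eqxx !orbT. Qed.

Lemma connect_GA_or_uv (S : {set V}) x y :
  x \in S :&: A -> connect (restr e S) x y ->
  if y \in A then connect (restr GA (S :&: A)) x y
  else connect (restr GA (S :&: A)) x u || connect (restr GA (S :&: A)) x v.
Proof.
move=> xSA xy; set R := restr GA (S :&: A).
have R_step w w' : connect R x w -> w' \in S -> GA w w' -> connect R x w'.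
  move=> xw w'S GAww'; have w'A : w' \in A by case/and3P: GAww'.
  have /setIP[wS wA] := connect_restr_mem xSA xw.
  apply: connect_trans xw (connect1 _).
  by rewrite /R /restr /= GAww' !inE wS wA w'S.
pose P := [set z | if z \in A then connect R x z
                   else connect R x u || connect R x v].
suff: y \in P by rewrite inE.
apply: connect_closed xy; last by move: xSA; rewrite !inE => /andP[_ ->].
move=> z z'; rewrite !inE => zP /and3P[ezz' zS z'S].
case z'A: (z' \in A); case zA: (z \in A) in zP *.
- by apply: R_step zP z'S _; rewrite /GA_rel /= zA z'A ezz'.
- case/orP: (sep_cap z'A (sep_edge (negbT zA) ezz')) => /eqP z'E;
    rewrite z'E in z'S *; case/orP: zP => // xw.
    exact: R_step xw z'S GA_uv.2.
  exact: R_step xw z'S GA_uv.1.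
- have zB : z \in B by apply: sep_edge (negbT z'A) _; rewrite e_sym.
  by case/orP: (sep_cap zA zB) => /eqP zE; rewrite -zE zP ?orbT.
- exact: zP.
Qed.

Lemma connect_GA (S : {set V}) x y :
  x \in S :&: A -> y \in A -> connect (restr e S) x y ->
  connect (restr GA (S :&: A)) x y.
Proof. by move=> xSA yA /(connect_GA_or_uv xSA); rewrite /= yA. Qed.

Lemma connected_sep_uv (S : {set V}) x y :
  connected_on e S -> x \in S :&: A -> y \in S :&: B -> (u \in S) || (v \in S).
Proof.
move=> [_ Sconn] xSA; rewrite inE => /andP[yS yB].
have xS : x \in S by move: xSA; rewrite inE => /andP[].
case yA: (y \in A).
  by case/orP: (sep_cap yA yB) => /eqP <-; rewrite yS ?orbT.
have := connect_GA_or_uv xSA (Sconn x y xS yS); rewrite /= yA.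
by case/orP=> /(connect_restr_mem xSA)/setIP[-> _]; rewrite ?orbT.
Qed.

Lemma component_sep_nbr y0 a0 : k_connected e 2 ->
  y0 \in B :\: A -> a0 \in A :\: B ->
  exists2 c, c \in component e (B :\: A) y0 & e c u.
Proof.
move=> [_ conn2] y0BA a0AB; have [_ vA _ vB] := sep_uv.
set C := component e (B :\: A) y0.
have y0C : y0 \in C by rewrite inE connect0.
have a0C : a0 \notin C.
  apply: contraTN a0AB; rewrite inE => /(connect_restr_mem y0BA).
  by rewrite !inE => /andP[/negbTE-> _]; rewrite andbF.
have [_ conn_v] : connected_on e (~: [set v]) by apply: conn2; rewrite cards1.
have y0a0 : connect (restr e (~: [set v])) y0 a0.
  apply: conn_v; rewrite !inE.
    by apply: contraTneq y0BA => ->; rewrite inE vA.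
  by apply: contraTneq a0AB => ->; rewrite inE vB.
have [c [z [cC zC /and3P[ecz _ zv]]]] := connect_exit y0C a0C y0a0.
have cBA : c \in B :\: A by move: cC; rewrite inE => /(connect_restr_mem y0BA).
have zB : z \in B by apply: sep_edge ecz; move: cBA; rewrite inE => /andP[].
exists c => //; case zA: (z \in A).
  case/orP: (sep_cap zA zB) => /eqP zE; first by rewrite -zE.
  by rewrite zE !inE eqxx in zv.
case/negP: zC; move: cC; rewrite !inE => /connect_trans; apply; apply: connect1.
by rewrite /restr /= ecz cBA !inE zA zB.
Qed.

End Separation.

Lemma setD_neq0 (T : finType) (X A B : {set T}) :
  X \subset A -> #|A :&: B| < #|X| -> A :\: B != set0.
Proof.
move=> XA ltABX; have /subsetPn[w wX wAB] : ~~ (X \subset A :&: B).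
  by apply: contraTN ltABX => /subset_leq_card; rewrite leqNgt.
apply/set0Pn; exists w; rewrite inE (subsetP XA) // andbT.
by rewrite inE (subsetP XA) in wAB.
Qed.

Section Minors.
Variables (VH : finType) (eH : rel VH) (V : finType) (e : rel V).
Variables (X A B : {set V}) (u v : V).
Hypotheses (e_sym : symmetric e) (sepAB : two_separation e A B)
  (capAB : A :&: B = [set u; v]).

Local Notation GA := (GA_rel e A u v).

Lemma model_meets_A M pi :
  k_connected eH 3 -> #|X| = 4 -> {in X &, injective pi} -> X \subset A ->
  model eH e setT M -> (forall w, w \in X -> w \in M (pi w)) ->
  forall x, ~~ [disjoint M x & A].
Proof.
move=> H3 cardX pi_inj XA [_ [Mconn [Mdisj Medge]]] Xin x.
have [uA vA _ _] := sep_uv capAB.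
set S := [set y | (u \in M y) || (v \in M y)].
have cardS : #|S| < 3.
  have -> : S = [set y | u \in M y] :|: [set y | v \in M y].
    by apply/setP => y; rewrite !inE.
  rewrite ltnS (leq_trans (leq_card_setU _ _).1) //.
  exact: leq_add (card_branches_le1 _ Mdisj) (card_branches_le1 _ Mdisj).
set J := [set y | [disjoint M y & A]].
have closedJ y z : y \in J -> eH y z -> z \notin S -> z \in J.
  rewrite !inE => yJ /Medge[a [b [aM bM eab]]]; apply: contraNT.
  rewrite -setI_eq0 => /set0Pn[q qMA].
  have aA : a \notin A by rewrite (disjointFr yJ aM).
  have bMB : b \in M z :&: B by rewrite inE bM (sep_edge e_sym sepAB aA eab).
  exact: (connected_sep_uv e_sym sepAB capAB (Mconn z) qMA bMB).
have [_ /imsetP[w wX ->] piwS] : exists2 y, y \in pi @: X & y \notin S.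
  apply/subsetPn/negP => /subset_leq_card.
  by rewrite card_in_imset // cardX => /leq_ltn_trans/(_ cardS).
apply/negP => xAdisj; have xJ : x \in J by rewrite inE.
have xS : x \notin S by rewrite inE !(disjointFl xAdisj).
have /[!inE] piwJ := k_connected_closed H3 cardS xJ xS closedJ piwS.
by move: (subsetP XA w wX); rewrite (disjointFr piwJ (Xin w wX)).
Qed.

Lemma HX_minor_wrt_restrict pi :
  simple_graph eH -> k_connected eH 3 -> #|X| = 4 -> {in X &, injective pi} ->
  X \subset A ->
  has_HX_minor_wrt eH e setT X pi -> has_HX_minor_wrt eH GA A X pi.
Proof.
move=> [_ eH_irr] H3 cardX pi_inj XA [M [Mmod Xin]].
have meetsA := model_meets_A H3 cardX pi_inj XA Mmod Xin.
case: Mmod => [_ [Mconn [Mdisj Medge]]].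
exists (fun x => M x :&: A); split.
  2: by move=> w wX; rewrite inE Xin // (subsetP XA).
split; first by move=> x; apply: subsetIr.
split.
  move=> x; split; first by rewrite setI_eq0.
  move=> p q pMA /setIP[qM qA]; apply: (connect_GA e_sym sepAB capAB pMA qA).
  by case/setIP: pMA => pM _; case: (Mconn x) => _; apply.
split; first by move=> x y /Mdisj; apply: disjointW; apply: subsetIl.
move=> x y eHxy; have [a [b [aM bM eab]]] := Medge x y eHxy.
have [/andP[aA bA]|/andP[aB bB]] := sep_edge_cases e_sym sepAB eab.
  by exists a, b; rewrite !inE aM aA bM bA /GA_rel /= aA bA eab.
have xy : x != y by apply: contraTneq eHxy => ->; rewrite eH_irr.
have uv_in z c : c \in M z -> c \in B -> (u \in M z) || (v \in M z).
  move=> cM cB; have /set0Pn[q qMA] : M z :&: A != set0 by rewrite setI_eq0.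
  have cMB : c \in M z :&: B by rewrite inE cM cB.
  exact: (connected_sep_uv e_sym sepAB capAB (Mconn z) qMA cMB).
have [uA vA _ _] := sep_uv capAB.
have [GAuv GAvu] := GA_uv e capAB.
case/orP: (uv_in x a aM aB) => ux; case/orP: (uv_in y b bM bB) => uy.
- by rewrite (disjointFr (Mdisj x y xy) ux) in uy.
- by exists u, v; rewrite !inE ux uy uA vA.
- by exists v, u; rewrite !inE ux uy uA vA.
- by rewrite (disjointFr (Mdisj x y xy) ux) in uy.
Qed.

Lemma HX_minor_wrt_extend pi :
  k_connected e 2 -> B :\: A != set0 -> A :\: B != set0 ->
  has_HX_minor_wrt eH GA A X pi -> has_HX_minor_wrt eH e setT X pi.
Proof.
move=> conn2 /set0Pn[y0 y0BA] /set0Pn[a0 a0AB].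
move=> [M [[MA [Mconn [Mdisj Medge]]] Xin]].
set C := component e (B :\: A) y0.
have [cu cuC ecu] := component_sep_nbr e_sym sepAB capAB conn2 y0BA a0AB.
have [cv cvC ecv] :=
  component_sep_nbr e_sym sepAB (etrans capAB (setUC _ _)) conn2 y0BA a0AB.
have [_ Cconn] := connected_component e_sym (B :\: A) y0.
have CM z x : z \in C -> z \notin M x.
  rewrite inE => /(connect_restr_mem y0BA); rewrite inE => /andP[zA _].
  by apply: contra zA; apply: (subsetP (MA x)).
pose M' x := if u \in M x then M x :|: C else M x.
have MM' x : M x \subset M' x.
  by rewrite /M'; case: ifP => _; [apply: subsetUl | apply: subxx].
have CM' x : u \in M x -> C \subset M' x by move=> ux; rewrite /M' ux subsetUr.
have M'P x z : z \in M' x -> z \in M x \/ u \in M x /\ z \in C.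
  by rewrite /M'; case: ifP => ux; [case/setUP; [left | right] | left].
exists M'; split; last by move=> w /Xin; apply: (subsetP (MM' _)).
split; first by move=> x; apply: subsetT.
split.
  move=> x; have [/set0Pn[p0 p0M] Mxconn] := Mconn x.
  set R := restr e (M' x).
  have C_path p q : u \in M x -> p \in C -> q \in C -> connect R p q.
    by move=> uM pC qC; apply: connect_restrS (CM' x uM) (Cconn p q pC qC).
  have u_cu : u \in M x -> R u cu.
    move=> uM; rewrite /R /restr /= e_sym ecu (subsetP (MM' x) _ uM).
    exact: (subsetP (CM' x uM)).
  have uv_path : u \in M x -> v \in M x -> connect R u v.
    move=> uM vM; apply: connect_trans (connect1 (u_cu uM)) _.
    apply: connect_trans (C_path _ _ uM cuC cvC) (connect1 _).
    by rewrite /R /restr /= ecv (subsetP (MM' x) _ vM) (subsetP (CM' x uM)).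
  have lift p q : connect (restr GA (M x)) p q -> connect R p q.
    apply: connect_sub => a b /and3P[GAab].
    case: (GA_relP GAab) => [eab aM bM | [-> ->] | [-> ->]]; last 2 first.
    - exact: uv_path.
    - by rewrite (connect_restrC e_sym) => vM uM; apply: uv_path.
    by apply: connect1; rewrite /R /restr /= eab !(subsetP (MM' x)).
  apply: (connected_onP e_sym (subsetP (MM' x) _ p0M)).
  move=> q /M'P[qM | [uM qC]]; first exact/lift/Mxconn.
  apply: connect_trans (lift _ _ (Mxconn _ _ p0M uM)) _.
  exact: connect_trans (connect1 (u_cu uM)) (C_path _ _ uM cuC qC).
split.
  move=> x y xy; rewrite -setI_eq0.
  apply/set0Pn => -[z /setIP[/M'P zx /M'P zy]].
  case: zx zy => [zx|[ux zC]] [zy|[uy zC']].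
  - by rewrite (disjointFr (Mdisj x y xy) zx) in zy.
  - by rewrite (negbTE (CM z x zC')) in zx.
  - by rewrite (negbTE (CM z y zC)) in zy.
  - by rewrite (disjointFr (Mdisj x y xy) ux) in uy.
move=> x y /Medge[a [b [aM bM /GA_relP[eab | [aE bE] | [aE bE]]]]].
- by exists a, b; rewrite !(subsetP (MM' _)).
- rewrite aE in aM; rewrite bE in bM.
  by exists cv, v; rewrite ecv (subsetP (CM' x aM)) // (subsetP (MM' y)).
- rewrite aE in aM; rewrite bE in bM.
  by exists v, cv; rewrite e_sym ecv (subsetP (CM' y bM)) // (subsetP (MM' x)).
Qed.

End Minors.

Theorem mainTheorem12 (VH : finType) (eH : rel VH) (V : finType) (e : rel V)
  (X : {set V}) (F : (V -> VH) -> Prop) (A B : {set V}) (u v : V) :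
  simple_graph eH -> k_connected eH 3 ->
  #|X| = 4 ->
  (forall pi, F pi -> {in X &, injective pi}) ->
  simple_graph e -> k_connected e 2 ->
  two_separation e A B -> A :&: B = [set u; v] -> B :\: A != set0 ->
  X \subset A ->
  (has_HX_minor eH e setT X F <-> has_HX_minor eH (GA_rel e A u v) A X F).
Proof.
move=> simpleH H3 cardX F_inj [e_sym _] conn2 sepAB capAB BA_ne XA.
have AB_ne : A :\: B != set0.
  apply: setD_neq0 XA _; case: sepAB => _ [capAB_le2 _].
  by rewrite cardX (leq_ltn_trans capAB_le2).
split=> -[pi [Fpi minor]]; exists pi; split=> //.
  exact: (HX_minor_wrt_restrict e_sym sepAB capAB simpleH H3 cardX
            (F_inj pi Fpi) XA minor).
exact: (HX_minor_wrt_extend e_sym sepAB capAB conn2 BA_ne AB_ne minor).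
Qed.
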